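(* (a) For any two directed graphs $G_1,G_2$ on the same vertex set $V$ (directed cycles allowed), if $D_{sep}(G_1)\subseteq D_{sep}(G_2)$ then $S(G_2)\subseteq S(G_1)$. (b) There exist two directed graphs $G_1,G_2$ on the same vertex set (with directed cycles) such that $S(G_1)=S(G_2)$, $D_{sep}(G_1)\neq D_{sep}(G_2)$ and $D_{sep}(G_1)\subset D_{sep}(G_2)$. For directed acyclic graphs, no two such graphs exist.
   Context: A directed graph $G=(V,E)$ has vertex set $V=\{1,\dots,p\}$ and directed edges $j\to k$ ($j\ne k$); directed cycles are allowed (a DCG), and a DAG is one without directed cycles. $k$ is a child of $j$ if $j\to k$; $k$ is a descendant of $j$ (and $j$ an ancestor of $k$) if there is a directed path $j\to\cdots\to k$. $j,k$ are really adjacent if $j\to k$ or $k\to j$, and virtually adjacent if they have a common child $\ell$ that is an ancestor of $j$ or of $k$. The skeleton $S(G)$ is the set of unordered pairs that are really or virtually adjacent. On an undirected path $\pi$, an interior vertex $b$ is a collider if both path edges at $b$ point into $b$. For $S\subset V\setminus\{j,k\}$, $j$ is d-connected to $k$ given $S$ if there is an undirected path between $j$ and $k$ on which every interior vertex lying in $S$ is a collider and every collider has itself or a descendant in $S$; otherwise $j$ is d-separated from $k$ given $S$. $D_{sep}(G)$ denotes the set of d-separation rules entailed by $G$, i.e. the set of all triples $(j,k,S)$ with $j\neq k$, $S\subset V\setminus\{j,k\}$ and $j$ d-separated from $k$ given $S$ in $G$. *)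

(* Directed graphs on V = 'I_p (vertices 0..p-1 stand for 1..p). *)
From mathcomp Require Import all_boot.
Set Implicit Arguments. Unset Strict Implicit. Unset Printing Implicit Defensive.

Definition digraph (p : nat) (E : rel 'I_p) : Prop := forall j, ~~ E j j.

Definition acyclic (p : nat) (E : rel 'I_p) : Prop :=
  forall j k, E j k -> ~~ connect E k j.

Definition skel (p : nat) (E : rel 'I_p) (j k : 'I_p) : Prop :=
  j != k /\
  (E j k \/ E k j \/
   exists l, [/\ E j l, E k l & connect E l j || connect E l k]).

(* An undirected path from j is encoded as a nonempty list of steps (v, d):
   the step goes from the previous vertex u to v, using the edge u -> v if
   d = true and the edge v -> u if d = false.  The interior vertices are the endpoints of all steps
   but the last; the endpoint of step i (i+1 < size s) is a collider iff
   step i points into it (d_i = true) and step i+1 points into it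
   (d_{i+1} = false). *)
Definition collider_at (p : nat) (j : 'I_p) (s : seq ('I_p * bool)) (i : nat) : bool :=
  (nth (j, true) s i).2 && ~~ (nth (j, true) s i.+1).2.

Definition dconnected (p : nat) (E : rel 'I_p) (j k : 'I_p) (S : {set 'I_p}) : Prop :=
  exists s : seq ('I_p * bool),
  [/\ s != [::],
      uniq (j :: map fst s),
      last j (map fst s) = k,
      (forall i, i < size s ->
         let u := nth j (j :: map fst s) i in
         let v := (nth (j, true) s i).1 in
         if (nth (j, true) s i).2 then E u v else E v u)
    & (forall i, i.+1 < size s ->
         let b := (nth (j, true) s i).1 in
         (b \in S -> collider_at j s i) /\
         (collider_at j s i -> exists2 c, c \in S & connect E b c))].

Definition Dsep (p : nat) (E : rel 'I_p) (j k : 'I_p) (S : {set 'I_p}) : Prop :=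
  [/\ j != k, j \notin S, k \notin S & ~ dconnected E j k S].

Definition Dsep_sub (p : nat) (E1 E2 : rel 'I_p) : Prop :=
  forall j k S, Dsep E1 j k S -> Dsep E2 j k S.

Definition Dsep_eq (p : nat) (E1 E2 : rel 'I_p) : Prop :=
  forall j k S, Dsep E1 j k S <-> Dsep E2 j k S.

Definition skel_sub (p : nat) (E1 E2 : rel 'I_p) : Prop :=
  forall j k, skel E1 j k -> skel E2 j k.

Definition skel_eq (p : nat) (E1 E2 : rel 'I_p) : Prop :=
  forall j k, skel E1 j k <-> skel E2 j k.

From mathcomp Require Import all_boot.
From Stdlib Require Import Classical FunctionalExtensionality.
From mathcomp Require Import zify.

Set Implicit Arguments. Unset Strict Implicit. Unset Printing Implicit Defensive.

(* d-connection given S is reachability in the finite graph of walk states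
   (vertex, direction of the last edge) whose steps make a vertex a collider
   exactly when it lies in S; a collider outside S with a descendant in S is
   crossed by a detour down to S and back, and repetitions of a d-connecting
   walk can be cut out.
   (a) Skeleton pairs are d-connected given every set avoiding the endpoints,
   while a non-adjacent pair j, k is d-separated in G1 by A, the ancestors of
   j or k other than j, k: a shortest active walk given A visits only such
   ancestors, so its interior vertices are colliders in A, which forces a real
   or virtual adjacency.
   (b) For DAGs, the separations by such sets A show that inclusion of the
   d-separation rules together with equal skeleta gives equal v-structures.
   Two DAGs with the same adjacencies and v-structures differ by a sequence of
   covered edge reversals (Chickering), each of which preserves active walks. *)

Lemma connect_inv (T : finType) (e : rel T) (P : pred T) x y :
  P x -> (forall a b, P a -> e a b -> P b) -> connect e x y -> P y.
Proof.
move=> Px Pe /connectP[q pq ->] {y}.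
by elim: q x Px pq => //= z q IH x Px /andP[/(Pe _ _ Px) Pz /(IH _ Pz)].
Qed.

Lemma map_not_uniq_split (T U : eqType) (f : T -> U) (L : seq T) :
  ~~ uniq (map f L) ->
  exists L1 x L2 y L3, L = L1 ++ x :: L2 ++ y :: L3 /\ f x = f y.
Proof.
elim: L => [|x L IH] //=; rewrite negb_and negbK => /orP[/mapP[y yL fxy] | /IH].
  by case/splitPr: yL => L2 L3; exists [::], x, L2, y, L3.
by case=> L1 [s1 [L2 [s2 [L3 [-> e]]]]]; exists (x :: L1), s1, L2, s2, L3.
Qed.

Definition adjacent p (E : rel 'I_p) a b := E a b || E b a.

Section ActiveWalks.
Variables (p : nat) (E : rel 'I_p) (S : {set 'I_p}).

(* A state (v, d) of a walk: v was entered along an edge u -> v if d, along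
   v -> u otherwise.  The vertex left by a step is a collider iff it was
   entered by d = true and is left along an edge pointing back into it. *)
Definition active_step : rel ('I_p * bool) := fun x y =>
  (if y.2 then E x.1 y.1 else E y.1 x.1) && ((x.1 \in S) == (x.2 && ~~ y.2)).

Definition active (j k : 'I_p) := exists g, connect active_step (j, false) (k, g).

Definition has_desc_in (v : 'I_p) := [exists c, (c \in S) && connect E v c].

Lemma active_step_down v d w : active_step (v, d) (w, true) = E v w && (v \notin S).
Proof. by rewrite /active_step /= andbF; case: (v \in S). Qed.

Lemma active_step_up v d w : active_step (v, d) (w, false) = E w v && ((v \in S) == d).
Proof. by rewrite /active_step /= andbT. Qed.

Lemma has_desc_in_self v : v \in S -> has_desc_in v.
Proof. by move=> vS; apply/existsP; exists v; rewrite vS connect0. Qed.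

Lemma has_desc_in_edge v w : E v w -> has_desc_in w -> has_desc_in v.
Proof.
move=> Evw /existsP[c /andP[cS wc]]; apply/existsP; exists c.
by rewrite cS (connect_trans (connect1 Evw) wc).
Qed.

(* A collider outside S reaches S through a descendant, and the walk bounces back. *)
Lemma active_detour b : b \notin S -> has_desc_in b ->
  connect active_step (b, true) (b, false).
Proof.
move=> bS /existsP[c /andP[cS /connectP[q pq lq]]]; subst c.
elim: q b bS pq cS => [|a q IH] b bS /=; first by move=> _ cS; rewrite cS in bS.
move=> /andP[Eba pq] lS.
have down : active_step (b, true) (a, true) by rewrite active_step_down Eba bS.
apply: connect_trans (connect1 down) _.
have [aS | aS] := boolP (a \in S).
  by apply: connect1; rewrite active_step_up Eba aS.
apply: connect_trans (IH a aS pq lS) (connect1 _).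
by rewrite active_step_up Eba (negbTE aS).
Qed.

Lemma active_down a b : ~~ has_desc_in a -> connect E a b ->
  connect active_step (a, true) (b, true).
Proof.
move=> na /connectP[q pq ->] {b}.
elim: q a na pq => [|c q IH] a na //= /andP[Eac pq].
have aS : a \notin S by apply: contra na; apply: has_desc_in_self.
have nc : ~~ has_desc_in c by apply: contra na; apply: has_desc_in_edge.
by apply: connect_trans (connect1 _) (IH c nc pq); rewrite active_step_down Eac aS.
Qed.

Lemma active_up a b : ~~ has_desc_in a -> connect E a b ->
  connect active_step (b, false) (a, false).
Proof.
move=> na /connectP[q pq ->] {b}.
elim: q a na pq => [|c q IH] a na //= /andP[Eac pq].
have nc : ~~ has_desc_in c by apply: contra na; apply: has_desc_in_edge.
have cS : c \notin S by apply: contra nc; apply: has_desc_in_self.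
by apply: connect_trans (IH c nc pq) (connect1 _); rewrite active_step_up Eac (negbTE cS).
Qed.

Lemma skel_active j k : j \notin S -> skel E j k -> active j k.
Proof.
move=> jS [_ [Ejk | [Ekj | [l [Ejl Ekl conn]]]]].
- by exists true; apply: connect1; rewrite active_step_down Ejk jS.
- by exists false; apply: connect1; rewrite active_step_up Ekj (negbTE jS).
have jl : connect active_step (j, false) (l, true).
  by apply: connect1; rewrite active_step_down Ejl jS.
have [dl | ndl] := boolP (has_desc_in l).
  exists false; apply: connect_trans jl _.
  have [lS | lS] := boolP (l \in S).
    by apply: connect1; rewrite active_step_up Ekl lS.
  apply: connect_trans (active_detour lS dl) (connect1 _).
  by rewrite active_step_up Ekl (negbTE lS).
have lS : l \notin S by apply: contra ndl; apply: has_desc_in_self.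
case/orP: conn => [lj | lk].
  exists false; apply: connect_trans (active_up ndl lj) (connect1 _).
  by rewrite active_step_up Ekl (negbTE lS).
by exists true; apply: connect_trans jl (active_down ndl lk).
Qed.

Lemma active_collider j k x : j \notin S -> E j x -> E k x -> x \in S -> active j k.
Proof.
move=> jS Ejx Ekx xS; exists false.
apply: (@connect_trans _ _ (x, true)); apply: connect1.
  by rewrite active_step_down Ejx jS.
by rewrite active_step_up Ekx xS.
Qed.

Lemma active_noncollider a b c : a \notin S -> b \notin S ->
  adjacent E a b -> adjacent E c b -> ~~ (E a b && E c b) -> active a c.
Proof.
rewrite /adjacent => aS bS ab cb ncol.
have [Eab | nEab] := boolP (E a b).
- have Ebc : E b c by move: cb ncol; rewrite Eab /=; case: (E c b).
  exists true; apply: (@connect_trans _ _ (b, true)); apply: connect1.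
    by rewrite active_step_down Eab aS.
  by rewrite active_step_down Ebc bS.
have Eba : E b a by move: ab; rewrite (negbTE nEab).
have ab' : connect active_step (a, false) (b, false).
  by apply: connect1; rewrite active_step_up Eba (negbTE aS).
have [Ecb | nEcb] := boolP (E c b).
  exists false; apply: connect_trans ab' (connect1 _).
  by rewrite active_step_up Ecb (negbTE bS).
have Ebc : E b c by move: cb; rewrite (negbTE nEcb).
exists true; apply: connect_trans ab' (connect1 _).
by rewrite active_step_down Ebc bS.
Qed.

Lemma dconnected_active j k : j \notin S -> dconnected E j k S -> active j k.
Proof.
move=> jS [s [sn _ lk edge col]].
have reach i : i < size s -> connect active_step (j, false) (nth (j, true) s i).
  elim: i => [|i IH] ilt.
    apply: connect1; move: (edge 0 ilt); case: (nth _ s 0) => v [] /= Ev.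
      by rewrite active_step_down Ev jS.
    by rewrite active_step_up Ev (negbTE jS).
  have := edge i.+1 ilt; rewrite /= (nth_map (j, true)) ?(ltnW ilt) //.
  move: (IH (ltnW ilt)) (col i ilt); rewrite /collider_at.
  case: (nth (j, true) s i) => b d; case: (nth (j, true) s i.+1) => c [] /= Rb [bS_col col_anc] Ebc.
    apply: connect_trans Rb (connect1 _); rewrite active_step_down Ebc.
    by apply/negP => /bS_col; rewrite andbF.
  rewrite andbT in bS_col col_anc; apply: (connect_trans Rb).
  have [bS | bS] := boolP (b \in S).
    by apply: connect1; rewrite active_step_up Ebc bS (bS_col bS).
  case: d {bS_col Rb} col_anc => col_anc; last first.
    by apply: connect1; rewrite active_step_up Ebc (negbTE bS).
  have [c' c'S bc'] := col_anc isT.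
  have db : has_desc_in b by apply/existsP; exists c'; rewrite c'S bc'.
  apply: connect_trans (active_detour bS db) (connect1 _).
  by rewrite active_step_up Ebc (negbTE bS).
have szp : 0 < size s by case: s sn {lk edge col reach}.
have lastk : (nth (j, true) s (size s).-1).1 = k.
  by rewrite -lk -(nth_map (j, true) j) ?prednK // -(size_map fst) nth_last.
exists (nth (j, true) s (size s).-1).2.
by rewrite -lastk -surjective_pairing; apply: reach; rewrite prednK.
Qed.

Definition dconnecting_step : rel ('I_p * bool) := fun x y =>
  [&& (if y.2 then E x.1 y.1 else E y.1 x.1),
      (x.1 \in S) ==> (x.2 && ~~ y.2) &
      (x.2 && ~~ y.2) ==> has_desc_in x.1].

Lemma active_dconnecting_step : subrel active_step dconnecting_step.
Proof.
move=> x y /andP[ed /eqP col]; rewrite /dconnecting_step ed -col implybb /=.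
by apply/implyP; apply: has_desc_in_self.
Qed.

(* Leaving v downwards and later using an edge out of the current vertex
   requires passing a collider, which is a descendant of v. *)
Lemma dconnecting_walk_has_desc v q : path dconnecting_step (v, true) q ->
  ~~ (last (v, true) q).2 -> has_desc_in v.
Proof.
elim: q v => [|[w g] q IH] v //= /andP[/and3P[ed _ col] pq] lq.
by case: g ed col pq lq => /= ed col pq lq; [apply: has_desc_in_edge ed (IH w pq lq) | apply: col].
Qed.

Lemma dconnecting_cut v f1 f2 L2 L3 :
  path dconnecting_step (v, f1) (rcons L2 (v, f2)) -> path dconnecting_step (v, f2) L3 ->
  path dconnecting_step (v, f1) L3.
Proof.
move=> pL2; case: L3 => [|y L3] //= /andP[/and3P[ed col1 col2] ->]; rewrite andbT.
have vS : v \in S -> f1.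
  by case: L2 pL2 => [|z L2] /= /andP[/and3P[_ /implyP col _] _] /col /andP[].
rewrite /dconnecting_step /=; apply/and3P; split=> //.
  by apply/implyP => /[dup] /vS -> /(implyP col1) /andP[].
apply/implyP => /andP[f1T ng]; have [f2T | nf2] := boolP f2.
  by apply: (implyP col2); rewrite f2T.
by rewrite f1T in pL2; apply: dconnecting_walk_has_desc pL2 _; rewrite last_rcons.
Qed.

Lemma dconnecting_walk_shorten x st : path dconnecting_step x st ->
  ~~ uniq (map fst (x :: st)) ->
  exists2 st', size st' < size st &
    path dconnecting_step x st' /\ (last x st').1 = (last x st).1.
Proof.
move=> pst /map_not_uniq_split [L1 [[v f1] [L2 [[w f2] [L3 [est /= evw]]]]]].
subst w; have cut := @dconnecting_cut v f1 f2 L2 L3.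
have lastL3 : (last (v, f1) L3).1 = (last (v, f2) L3).1 by case: L3 {est cut}.
case: L1 est => [|x' L1] /= [ex est]; subst x st.
  exists L3; first by rewrite size_cat /=; lia.
  move: pst; rewrite -cat_rcons cat_path last_rcons => /andP[p2 p3].
  by rewrite last_cat last_rcons lastL3; split; [apply: cut |].
exists (L1 ++ (v, f1) :: L3); first by rewrite !size_cat /= size_cat /=; lia.
move: pst; rewrite cat_path -cat_rcons => /andP[p1 pr].
split; last by rewrite !last_cat /= last_cat last_rcons.
rewrite cat_path p1 /=; move: pr => /= /andP[-> ]; rewrite cat_path last_rcons.
by case/andP; apply: cut.
Qed.

Lemma dconnecting_path_dconnected j k st : st != [::] -> uniq (j :: map fst st) ->
  path dconnecting_step (j, false) st -> (last (j, false) st).1 = k ->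
  dconnected E j k S.
Proof.
move=> sn us pst lst; exists st; split => //.
- by rewrite -lst -(last_map fst).
- move=> i ilt /=.
  move/pathP: pst => /(_ (j, false) i ilt) /and3P[ed _ _].
  have -> : nth j (j :: map fst st) i = (nth (j, false) ((j, false) :: st) i).1.
    by rewrite -(nth_map _ j) //= ltnW.
  by rewrite (set_nth_default (j, false) (j, true) ilt).
- move=> i ilt /=.
  move/pathP: pst => /(_ (j, false) i.+1 ilt) /= /and3P[_ col1 col2].
  rewrite /collider_at !(set_nth_default (j, false) (j, true)) ?(ltnW ilt) //.
  split; first by move/implyP: col1.
  by move/implyP: col2 => col2 /col2 /existsP[c /andP[cS bc]]; exists c.
Qed.

Lemma dconnecting_walk_dconnected j k st : j != k ->
  path dconnecting_step (j, false) st -> (last (j, false) st).1 = k ->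
  dconnected E j k S.
Proof.
move=> jk; have [n] := ubnP (size st); elim: n st => // n IH st /ltnSE szst pst lst.
have [us | nus] := boolP (uniq (j :: map fst st)).
  apply: (dconnecting_path_dconnected _ us pst lst).
  by apply: contra_neq jk => st0; rewrite -lst st0.
have [st' lt [pst' lst']] := dconnecting_walk_shorten pst nus.
by apply: (IH st') => //; [apply: leq_trans szst | rewrite lst'].
Qed.

Lemma active_dconnected j k : j != k -> active j k -> dconnected E j k S.
Proof.
move=> jk [g /connectP[st pst lst]].
apply: (dconnecting_walk_dconnected jk (sub_path active_dconnecting_step pst)).
by rewrite -lst.
Qed.

Lemma dconnected_activeE j k : j != k -> j \notin S ->
  dconnected E j k S <-> active j k.
Proof.
by move=> jk jS; split; [apply: dconnected_active | apply: active_dconnected].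
Qed.
End ActiveWalks.

Section Ancestral.
Variables (p : nat) (E : rel 'I_p) (j k : 'I_p).

Definition ancestor2 x := connect E x j || connect E x k.

Definition anc_set : {set 'I_p} := [set x | [&& ancestor2 x, x != j & x != k]].

Lemma ancestor2_edge x y : E x y -> ancestor2 y -> ancestor2 x.
Proof.
by rewrite /ancestor2 => Exy /orP[] /(connect_trans (connect1 Exy)) ->; rewrite ?orbT.
Qed.

Lemma anc_set_ancestor2 x : x \in anc_set -> ancestor2 x.
Proof. by rewrite inE => /andP[]. Qed.

Lemma active_walk_up_ancestral x q : path (active_step E anc_set) x q ->
  (~~ x.2 -> ancestor2 x.1) -> {in x :: q, forall st, ~~ st.2 -> ancestor2 st.1}.
Proof.
elim: q x => [|y q IH] x /=; first by move=> _ Ax st; rewrite inE => /eqP ->.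
case: y => w [] /= /andP[step pq] Ax st; rewrite inE => /orP[/eqP -> // | stq];
  apply: (IH _ pq) stq => // _; case/andP: step => Ewv /eqP col.
apply: ancestor2_edge Ewv _; case: x Ax col => v [] //= Av; last by move=> _; apply: Av.
by move/anc_set_ancestor2.
Qed.

Lemma active_walk_down_ancestral x q : path (active_step E anc_set) x q ->
  ancestor2 (last x q).1 -> {in x :: q, forall st : 'I_p * bool, st.2 -> ancestor2 st.1}.
Proof.
elim: q x => [|y q IH] x /=; first by move=> _ Ax st; rewrite inE => /eqP ->.
move=> /andP[step pq] Alast st; rewrite inE => /orP[/eqP -> {st} xT | ]; last exact: IH.
case: y step pq Alast => w [] /andP[/= ed /eqP col] pq Alast.
  by apply: ancestor2_edge ed (IH _ pq Alast _ (mem_head _ _) isT).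
by move: col; rewrite xT /= => /anc_set_ancestor2.
Qed.

Lemma active_anc_set_skel : digraph E -> j != k -> active E anc_set j k -> skel E j k.
Proof.
move=> dE jk [g /connectP[q0 pq0]]; case: (shortenP pq0) => q pq uq _ {q0 pq0} lq.
have Aq st : st \in (j, false) :: q -> ancestor2 st.1.
  have Ak : ancestor2 k by rewrite /ancestor2 connect0 orbT.
  case: st => v [] inq.
    have Alast : ancestor2 (last (j, false) q).1 by move: Ak; rewrite -[k]/((k, g).1) lq.
    exact: (active_walk_down_ancestral pq Alast inq).
  by apply: (active_walk_up_ancestral pq _ inq) => // _; rewrite /ancestor2 connect0.
split=> //; case: q pq uq lq Aq => [|[b d] q] /=; first by move=> _ _ [kj _]; rewrite kj eqxx in jk.
case/andP => /andP[/= Ejb /eqP colj] pq uq lq Aq.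
have [bk | bk] := eqVneq b k.
  by subst b; case: d Ejb {colj pq uq lq Aq} => Ejb; [left | right; left].
have bj : b != j by apply: contraNneq (dE j) => bj; move: Ejb; rewrite bj if_same.
have bS : b \in anc_set by rewrite inE bj bk (Aq (b, d)) // !inE eqxx orbT.
case: q pq uq lq Aq => [|[c e] q] /=; first by move=> _ _ [kb _]; rewrite kb eqxx in bk.
case/andP => /andP[/= Ecb /eqP colb] pq uq lq Aq.
have /andP[dT ne] : d && ~~ e by rewrite -colb.
rewrite dT in Ejb; rewrite (negbTE ne) in Ecb.
have [ck | ck] := eqVneq c k.
  subst c; right; right; exists b; split=> //.
  by apply: (Aq (b, d)); rewrite !inE eqxx orbT.
have cj : c != j.
  by apply: contraTneq uq => cj; rewrite cj (negbTE ne) /= !inE eqxx !orbT.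
have cS : c \in anc_set by rewrite inE cj ck (Aq (c, e)) // !inE eqxx !orbT.
case: q pq uq lq Aq => [|[w f] q] /=; first by move=> _ _ [kc _]; rewrite kc eqxx in ck.
by case/andP => /andP[_ /eqP]; rewrite cS (negbTE ne).
Qed.
End Ancestral.

Lemma not_skel_Dsep p (E : rel 'I_p) j k : digraph E -> j != k -> ~ skel E j k ->
  Dsep E j k (anc_set E j k).
Proof.
move=> dE jk nsk; split => //; rewrite ?inE ?eqxx ?andbF //.
by move/dconnected_activeE; rewrite inE eqxx andbF => /(_ jk isT) /(active_anc_set_skel dE jk).
Qed.

Lemma Dsep_sub_skel p (E1 E2 : rel 'I_p) : digraph E1 ->
  Dsep_sub E1 E2 -> skel_sub E2 E1.
Proof.
move=> d1 sub j k sk2; apply: NNPP => nsk1.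
have jk : j != k by case: sk2.
have [_ jS _ nd] := sub _ _ _ (not_skel_Dsep d1 jk nsk1).
by apply/nd/active_dconnected/skel_active.
Qed.

Lemma parentless_connect (T : finType) (E : rel T) u v :
  (forall w, ~~ E w v) -> connect E u v -> u = v.
Proof.
move=> nv /connectP[q]; case/lastP: q => [|q w] //=.
by rewrite last_rcons rcons_path => /andP[_] + wv; subst w; rewrite (negbTE (nv _)).
Qed.

Lemma not_skel_parentless p (E : rel 'I_p) j k : digraph E ->
  (forall u, ~~ E u j) -> (forall u, ~~ E u k) -> ~ skel E j k.
Proof.
move=> dE nj nk [_ [Ejk | [Ekj | [l [Ejl Ekl /orP[lj | lk]]]]]].
- by rewrite (negbTE (nk j)) in Ejk.
- by rewrite (negbTE (nj k)) in Ekj.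
- by move: Ejl; rewrite (parentless_connect nj lj) (negbTE (dE j)).
- by move: Ekl; rewrite (parentless_connect nk lk) (negbTE (dE k)).
Qed.

Lemma closed_not_active p (E : rel 'I_p) S j k (P : pred ('I_p * bool)) :
  P (j, false) -> (forall a b, P a -> active_step E S a b -> P b) ->
  (forall g, ~~ P (k, g)) -> ~ active E S j k.
Proof. by move=> Pj Pstep nPk [g /(connect_inv Pj Pstep)]; apply/negP. Qed.

(* G2 : 0 -> 1 <-> 2 <- 3; G1 adds 0 -> 2 and 3 -> 1.  In G2 the pairs {0,2}
   and {1,3} are only virtually adjacent, through the 2-cycle.  Both graphs
   separate 0 and 3 given the empty set, but only G2 also given {1,2}. *)
Definition ex1 : rel 'I_4 := fun a b =>
  ((a : nat), (b : nat)) \in [:: (0, 1); (1, 2); (2, 1); (3, 2); (0, 2); (3, 1)].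
Definition ex2 : rel 'I_4 := fun a b =>
  ((a : nat), (b : nat)) \in [:: (0, 1); (1, 2); (2, 1); (3, 2)].

Definition o0 : 'I_4 := @Ordinal 4 0 isT.
Definition o1 : 'I_4 := @Ordinal 4 1 isT.
Definition o2 : 'I_4 := @Ordinal 4 2 isT.
Definition o3 : 'I_4 := @Ordinal 4 3 isT.

Definition ends03 (j k : 'I_4) := ((j == o0) && (k == o3)) || ((j == o3) && (k == o0)).

Ltac case_I4 x := case: x => [[|[|[|[|?]]]] ?] //.

Lemma ex1_digraph : digraph ex1.
Proof. by move=> j; case_I4 j. Qed.

Lemma ex2_digraph : digraph ex2.
Proof. by move=> j; case_I4 j. Qed.

Lemma ex_not_skel E j k : digraph E -> (forall u, ~~ E u o0) -> (forall u, ~~ E u o3) ->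
  ends03 j k -> ~ skel E j k.
Proof.
move=> dE n0 n3 /orP[] /andP[/eqP -> /eqP ->]; exact: not_skel_parentless.
Qed.

Lemma ex1_skel j k : j != k -> ~~ ends03 j k -> skel ex1 j k.
Proof. by move=> jk ne; split=> //; move: jk ne; case_I4 j; case_I4 k; auto. Qed.

Lemma ex2_skel j k : j != k -> ~~ ends03 j k -> skel ex2 j k.
Proof.
move=> jk ne; split=> //; move: jk ne; case_I4 j; case_I4 k => // _ _; auto;
  right; right; [exists o1 | exists o2 | exists o1 | exists o2];
  by split; [reflexivity | reflexivity | apply/orP; auto using connect1].
Qed.

Lemma ex_skel_eq : skel_eq ex1 ex2.
Proof.
move=> j k; have [e | ne] := boolP (ends03 j k); last first.
  by split=> -[jk _]; [apply: ex2_skel | apply: ex1_skel].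
have n1 : ~ skel ex1 j k.
  by apply: ex_not_skel e => [|u|u]; [exact: ex1_digraph | case_I4 u | case_I4 u].
have n2 : ~ skel ex2 j k.
  by apply: ex_not_skel e => [|u|u]; [exact: ex2_digraph | case_I4 u | case_I4 u].
by split=> [/n1 | /n2].
Qed.

Lemma ex2_Dsep_ends j k : ends03 j k -> Dsep ex2 j k set0.
Proof.
move=> e; have jk : j != k by case/orP: (e) => /andP[/eqP -> /eqP ->].
split; rewrite ?in_set0 // => /dconnected_active; rewrite in_set0 => /(_ isT).
apply: (@closed_not_active _ _ _ _ _ (fun st => st \in [:: (j, false); (o1, true); (o2, true)])).
- by rewrite inE eqxx.
- move: e => /orP[] /andP[/eqP -> /eqP _] [a f] [b g]; rewrite /active_step in_set0 /=;
    case_I4 a; case_I4 b; case: f; case: g; vm_compute; auto.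
- by move=> g; case/orP: e => /andP[/eqP -> /eqP ->]; case: g.
Qed.

Lemma ex2_Dsep_colliders : Dsep ex2 o0 o3 [set o1; o2].
Proof.
split; rewrite ?inE // => /dconnected_active; rewrite !inE => /(_ isT).
apply: (@closed_not_active _ _ _ _ _ (fun st => st \in [:: (o0, false); (o1, true); (o2, false)])).
- by rewrite inE eqxx.
- move=> [a f] [b g]; rewrite /active_step !inE /=;
    case_I4 a; case_I4 b; case: f; case: g; vm_compute; auto.
- by case.
Qed.

Lemma ex_Dsep_sub : Dsep_sub ex1 ex2.
Proof.
move=> j k S [jk jS kS nd].
have e : ends03 j k.
  apply/negPn/negP => ne; apply: nd; apply: active_dconnected => //.
  exact/skel_active/ex1_skel.
suff S0 : S = set0 by rewrite S0; apply: ex2_Dsep_ends.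
apply/setP => x; rewrite inE; apply/negP => xS.
have xj : x != j by apply: contraNneq jS => <-.
have xk : x != k by apply: contraNneq kS => <-.
have [Ejx Ekx] : ex1 j x /\ ex1 k x.
  by clear -e xj xk; move: e xj xk; case_I4 j; case_I4 k; case_I4 x; vm_compute; auto.
by apply/nd/active_dconnected/(active_collider jS Ejx Ekx).
Qed.

Lemma ex_not_Dsep_eq : ~ Dsep_eq ex1 ex2.
Proof.
move/(_ o0 o3 [set o1; o2])/proj2/(_ ex2_Dsep_colliders) => [_ o0S _]; apply.
by apply/active_dconnected/(@active_collider _ _ _ _ _ o1) => //; rewrite !inE.
Qed.

Definition reverse_edge p (E : rel 'I_p) (x y : 'I_p) : rel 'I_p := fun a b =>
  if (a == x) && (b == y) then false else if (a == y) && (b == x) then true else E a b.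

Definition covered p (E : rel 'I_p) (x y : 'I_p) : Prop :=
  [/\ E x y, ~~ E y x, forall z, E z x -> E z y & forall z, E z y -> z != x -> E z x].

Section ReverseEdge.
Variables (p : nat) (E : rel 'I_p) (x y : 'I_p).
Hypothesis xy : x != y.

Lemma reverse_xy : reverse_edge E x y x y = false.
Proof. by rewrite /reverse_edge !eqxx. Qed.

Lemma reverse_yx : reverse_edge E x y y x = true.
Proof. by rewrite /reverse_edge !eqxx (negbTE xy) eq_sym (negbTE xy). Qed.

Lemma reverse_l a b : a != x -> a != y -> reverse_edge E x y a b = E a b.
Proof. by move=> /negbTE ax /negbTE ay; rewrite /reverse_edge ax ay. Qed.

Lemma reverse_r a b : b != x -> b != y -> reverse_edge E x y a b = E a b.
Proof. by move=> /negbTE bx /negbTE by_; rewrite /reverse_edge bx by_ !andbF. Qed.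
End ReverseEdge.

Section CoveredReversal.
Variables (p : nat) (E : rel 'I_p) (S : {set 'I_p}) (x y j : 'I_p).
Hypotheses (dE : digraph E) (Exy : E x y) (nEyx : ~~ E y x)
  (Cx : forall z, E z x -> E z y) (Cy : forall z, E z y -> z != x -> E z x).

Local Notation E' := (reverse_edge E x y).
Local Notation step := (active_step E S).
Local Notation step' := (active_step E' S).

Let xy : x != y.
Proof. by apply: contraNneq (dE x) => {2}->. Qed.

Lemma step_l v f w g : v != x -> v != y -> step (v, f) (w, g) -> step' (v, f) (w, g).
Proof. by move=> vx vy; rewrite /active_step /= (reverse_l E w vx vy) (reverse_r E w vx vy). Qed.
Lemma step_r v f w g : w != x -> w != y -> step (v, f) (w, g) -> step' (v, f) (w, g).
Proof. by move=> wx wy; rewrite /active_step /= (reverse_l E v wx wy) (reverse_r E v wx wy). Qed.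

Let reach := connect (step') (j, false).

Lemma reach_step a b : reach a -> step' a b -> reach b.
Proof. by move=> Ra ab; apply: connect_trans Ra (connect1 ab). Qed.

Let both := reach (x, true) && reach (y, true).
Let sim_x_out := [|| reach (x, false), both && (y \in S) | reach (y, false) && (y \notin S)].
Let sim_y_in := [|| both, reach (x, false) && (x \notin S) | [&& reach (y, false), y \notin S & x \notin S]].
(* [sim st]: the state st of an active walk in E from (j, false) has a
   counterpart reachable in the reversed graph.  At x and y the counterpart may
   differ from st itself: e.g. entering x downwards in E is simulated by having
   reached both x and y downwards, since x and y have the same parents. *)
Let sim (st : 'I_p * bool) : bool :=
  if st.1 == x then (if st.2 then both else sim_x_out)
  else if st.1 == y then (if st.2 then sim_y_in else reach (y, false))
  else reach st.

Lemma step_inv (v : 'I_p) f w (g : bool) : step (v, f) (w, g) ->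
  (if g then E v w else E w v) /\ ((v \in S) = (f && ~~ g)).
Proof. by move=> /andP[a /eqP b]. Qed.

Lemma sim_other_x v f g : v != x -> v != y -> reach (v, f) -> step (v, f) (x, g) -> sim (x, g).
Proof.
move=> vx vy Rv T; rewrite /sim eqxx /=.
have [ed c] := step_inv T.
case: g ed c T => ed c T.
  rewrite /both (reach_step Rv (step_l vx vy T)) /=.
  by apply: (reach_step Rv); rewrite /active_step /= (reverse_l E y vx vy) (Cx ed) /= c.
by rewrite /sim_x_out (reach_step Rv (step_l vx vy T)).
Qed.

Lemma sim_other_y v f g : v != x -> v != y -> reach (v, f) -> step (v, f) (y, g) -> sim (y, g).
Proof.
move=> vx vy Rv T; rewrite /sim eq_sym (negbTE xy) eqxx /=.
have [ed c] := step_inv T.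
case: g ed c T => ed c T; last exact: (reach_step Rv (step_l vx vy T)).
rewrite /sim_y_in /both (reach_step Rv (step_l vx vy T)) andbT /=.
apply/orP; left; apply: (reach_step Rv).
by rewrite /active_step /= (reverse_l E x vx vy) (Cy ed vx) /= c.
Qed.

Lemma sim_x_other f w g : w != x -> w != y -> sim (x, f) -> step (x, f) (w, g) -> reach (w, g).
Proof.
move=> wx wy; rewrite /sim eqxx /= => I T.
have [ed c] := step_inv T.
case: f I T c => I T c.
  by case/andP: I => Rx _; apply: (reach_step Rx (step_r wx wy T)).
case/or3P: I.
- by move=> Rx; apply: (reach_step Rx (step_r wx wy T)).
- case/andP => /andP[Rx Ry] yS; case: g ed c T => ed c T.
    by apply: (reach_step Rx); rewrite /active_step /= (reverse_r E x wx wy) ed c.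
  by apply: (reach_step Ry); rewrite /active_step /= (reverse_l E y wx wy) (Cx ed) yS.
- case/andP => Ry yS; case: g ed c T => ed c T.
    apply: (@reach_step (x, true)).
      by apply: (reach_step Ry); rewrite /active_step /= (reverse_yx E xy) (negbTE yS).
    by rewrite /active_step /= (reverse_r E x wx wy) ed c.
  by apply: (reach_step Ry); rewrite /active_step /= (reverse_l E y wx wy) (Cx ed) (negbTE yS).
Qed.

Lemma sim_y_other f w g : w != x -> w != y -> sim (y, f) -> step (y, f) (w, g) -> reach (w, g).
Proof.
move=> wx wy; rewrite /sim eq_sym (negbTE xy) eqxx /= => I T.
have [ed c] := step_inv T.
case: f I T c => I T c; last by apply: (reach_step I (step_r wx wy T)).
case/or3P: I.
- by case/andP => _ Ry; apply: (reach_step Ry (step_r wx wy T)).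
- case/andP => Rx xS; case: g ed c T => ed c T.
    apply: (@reach_step (y, false)).
      by apply: (reach_step Rx); rewrite /active_step /= (reverse_yx E xy) (negbTE xS).
    by rewrite /active_step /= (reverse_r E y wx wy) ed c.
  by apply: (reach_step Rx); rewrite /active_step /= (reverse_l E x wx wy) (Cy ed wx) (negbTE xS).
- case/and3P => Ry yS xS; case: g ed c T => ed c T.
    by apply: (reach_step Ry); rewrite /active_step /= (reverse_r E y wx wy) ed (negbTE yS).
  by move: yS; rewrite c.
Qed.

Lemma sim_x_y f g : sim (x, f) -> step (x, f) (y, g) -> sim (y, g).
Proof.
rewrite /sim eqxx eq_sym (negbTE xy) eqxx /= => I T.
have [ed c] := step_inv T.
case: g ed c {T} => ed c; last by move: nEyx; rewrite ed.
have xS : x \notin S by rewrite c andbF.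
rewrite /sim_y_in; case: f I {c} => I; first by rewrite I.
case/or3P: I => [Rx | /andP[K _] | /andP[Ry yS]].
- by rewrite Rx xS orbT.
- by rewrite K.
- by rewrite Ry yS xS !orbT.
Qed.

Lemma sim_y_x f g : sim (y, f) -> step (y, f) (x, g) -> sim (x, g).
Proof.
rewrite /sim eqxx eq_sym (negbTE xy) eqxx /= => I T.
have [ed c] := step_inv T.
case: g ed c {T} => ed c; first by move: nEyx; rewrite ed.
rewrite andbT in c; rewrite /sim_x_out.
case: f I c => I c.
  case/or3P: I => [K | /andP[Rx _] | /and3P[_ yS _]].
  + by rewrite K c orbT.
  + by rewrite Rx.
  + by move: yS; rewrite c.
by rewrite I c !orbT.
Qed.

Lemma sim_step a b : sim a -> step a b -> sim b.
Proof.
case: a b => v f [w g] I T.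
have vw : v != w.
  apply/eqP => e; subst w; have [ed _] := step_inv T.
  by move: (dE v); case: (g) ed => ->.
case: (eqVneq v x) => [vx | vx]; case: (eqVneq v y) => [vy | vy].
- by move: xy; rewrite -vx -vy eqxx.
- subst v; case: (eqVneq w y) => [wy | wy].
    by subst w; apply: sim_x_y I T.
  have wx : w != x by rewrite eq_sym.
  rewrite /sim /= (negbTE wx) (negbTE wy).
  exact: sim_x_other wx wy I T.
- subst v; case: (eqVneq w x) => [wx | wx].
    by subst w; apply: sim_y_x I T.
  have wy : w != y by rewrite eq_sym.
  rewrite /sim /= (negbTE wx) (negbTE wy).
  exact: sim_y_other wx wy I T.
- have Rv : reach (v, f) by move: I; rewrite /sim /= (negbTE vx) (negbTE vy).
  case: (eqVneq w x) => [wx | wx]; first by subst w; apply: sim_other_x vx vy Rv T.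
  case: (eqVneq w y) => [wy | wy]; first by subst w; apply: sim_other_y vx vy Rv T.
  rewrite /sim /= (negbTE wx) (negbTE wy).
  exact: (reach_step Rv (step_l vx vy T)).
Qed.

Lemma sim_start : sim (j, false).
Proof.
rewrite /sim /=; case: (eqVneq j x) => [jx | jx].
  by rewrite /sim_x_out -jx /reach connect0.
by case: (eqVneq j y) => [jy | jy]; rewrite /reach -?jy connect0.
Qed.

Lemma sim_active k g : sim (k, g) -> active E' S j k.
Proof.
rewrite /sim /=; case: (eqVneq k x) => [-> {k} | kx].
  case: g => [/andP[Rx _] | ]; first by exists true.
  case/or3P => [Rx | /andP[/andP[Rx _] _] | /andP[Ry yS]]; [by exists false | by exists true |].
  exists true; apply: (reach_step Ry).
  by rewrite /active_step /= (reverse_yx E xy) (negbTE yS).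
case: (eqVneq k y) => [ky | ky]; last by exists g.
subst k.
case: g => [|Ry]; last by exists false.
case/or3P => [/andP[_ Ry] | /andP[Rx xS] | /and3P[Ry _ _]].
- by exists true.
- exists false; apply: (reach_step Rx).
  by rewrite /active_step /= (reverse_yx E xy) (negbTE xS).
- by exists false.
Qed.

Lemma active_reverse_covered k : active E S j k -> active E' S j k.
Proof. by case=> g /(connect_inv sim_start sim_step)/sim_active. Qed.
End CoveredReversal.

Lemma reverse_edgeK p (E : rel 'I_p) x y : E x y -> ~~ E y x ->
  reverse_edge (reverse_edge E x y) y x = E.
Proof.
move=> Exy nEyx; apply: functional_extensionality => a.
apply: functional_extensionality => b; rewrite /reverse_edge.
have [/andP[/eqP -> /eqP ->] | _] := boolP ((a == y) && (b == x)); first by rewrite (negbTE nEyx).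
by have [/andP[/eqP -> /eqP ->] | //] := boolP ((a == x) && (b == y)); rewrite Exy.
Qed.

Lemma covered_reverse p (E : rel 'I_p) x y : digraph E -> covered E x y ->
  digraph (reverse_edge E x y) /\ covered (reverse_edge E x y) y x.
Proof.
move=> dE [Exy nEyx Cx Cy].
have xy : x != y by apply: contraNneq (dE x) => {2}->.
have yx : y != x by rewrite eq_sym.
split; first by move=> a; rewrite /reverse_edge; case: (a == x); case: (a == y); rewrite ?dE.
split; rewrite ?reverse_yx ?reverse_xy // => z; rewrite /reverse_edge.
- case: (eqVneq z x) => [-> | zx]; case: (eqVneq z y) => [zy | zy];
    rewrite ?eqxx ?(negbTE xy) ?(negbTE yx) //= => Ezy; exact: Cy.
- case: (eqVneq z x) => [-> | zx]; case: (eqVneq z y) => [zy | zy];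
    rewrite ?eqxx ?(negbTE xy) ?(negbTE yx) //= ?(negbTE (dE x)) // => Ezx _; exact: Cx.
Qed.

Lemma active_reverse_coveredE p (E : rel 'I_p) S x y j k : digraph E -> covered E x y ->
  active E S j k <-> active (reverse_edge E x y) S j k.
Proof.
move=> dE cov; have [dE' [E'yx nE'xy Cy' Cx']] := covered_reverse dE cov.
case: cov => Exy nEyx Cx Cy; split; first exact: active_reverse_covered.
by move/(active_reverse_covered dE' E'yx nE'xy Cy' Cx'); rewrite reverse_edgeK.
Qed.

Section Acyclic.
Variable p : nat.
Implicit Types (E : rel 'I_p).

Definition vstruct E a b c := [&& E a b, E c b, a != c & ~~ adjacent E a c].
Definition n_anc E v := #|[set u | connect E u v]|.
Definition reversed_edges (E1 E2 : rel 'I_p) : {set 'I_p * 'I_p} :=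
  [set e | E1 e.1 e.2 && E2 e.2 e.1].

Lemma acyclic_digraph E : acyclic E -> digraph E.
Proof. by move=> aE a; apply/negP => Eaa; move: (aE a a Eaa); rewrite connect0. Qed.

Lemma acyclic_asym E a b : acyclic E -> E a b -> ~~ E b a.
Proof. by move=> aE Eab; apply/negP => Eba; move: (aE a b Eab); rewrite connect1. Qed.

Lemma acyclic_connect_antisym E a b : acyclic E -> connect E a b -> connect E b a -> a = b.
Proof.
move=> aE /connectP[[|c q] /= pq ->] // ba.
case/andP: pq => Eac pq.
have : connect E c a by apply: connect_trans _ ba; apply/connectP; exists q.
by move: (aE a c Eac) => /negbTE ->.
Qed.

Lemma n_anc_lt E a b : acyclic E -> connect E a b -> a != b -> n_anc E a < n_anc E b.
Proof.
move=> aE ab nab; apply: proper_card; apply/properP; split.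
  by apply/subsetP => u; rewrite !inE => ua; apply: connect_trans ua ab.
exists b; rewrite inE ?connect0 //.
by apply/negP => ba; move: nab; rewrite (acyclic_connect_antisym aE ab ba) eqxx.
Qed.

End Acyclic.

Section CoveredReversedEdge.
Variables (p : nat) (E1 E2 : rel 'I_p) (x y : 'I_p).
Hypotheses (a1 : acyclic E1) (a2 : acyclic E2) (adjE : adjacent E1 =2 adjacent E2)
  (vsE : forall a b c, vstruct E1 a b c = vstruct E2 a b c)
  (Exy : E1 x y) (E2yx : E2 y x)
  (ymin : forall u v, E1 u v -> E2 v u -> n_anc E1 y <= n_anc E1 v)
  (xmax : forall u, E1 u y -> E2 y u -> n_anc E1 u <= n_anc E1 x).

Lemma reversed_not_above u v : E1 u v -> connect E1 v y -> v != y -> ~~ E2 v u.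
Proof.
move=> Euv vy nvy; apply/negP => /(ymin Euv).
by rewrite leqNgt (n_anc_lt a1 vy nvy).
Qed.

Lemma minimal_reversed_parents_x z : E1 z x -> E1 z y.
Proof.
move=> Ezx; have zy : z != y.
  by apply: contraTneq Ezx => ->; apply: acyclic_asym.
have : adjacent E1 z y.
  apply/negPn/negP => nzy; have : adjacent E2 z x by rewrite -adjE /adjacent Ezx.
  case/orP => [E2zx | E2xz].
    have : vstruct E2 z x y by rewrite /vstruct E2zx E2yx zy -adjE nzy.
    by rewrite -vsE => /and4P[_ E1yx _ _]; move: (acyclic_asym a1 Exy); rewrite E1yx.
  have xy : x != y by apply: contraTneq Exy => ->; apply: acyclic_digraph.
  by move: (reversed_not_above Ezx (connect1 Exy) xy); rewrite E2xz.
case/orP => // E1yz; move: (a1 E1yz).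
by rewrite (connect_trans (connect1 Ezx) (connect1 Exy)).
Qed.

Lemma minimal_reversed_parents_y w : E1 w y -> w != x -> E1 w x.
Proof.
move=> Ewy wx; have : adjacent E1 w x.
  apply/negPn/negP => nwx.
  have : vstruct E1 w y x by rewrite /vstruct Ewy Exy wx nwx.
  by rewrite vsE => /and4P[_ E2xy _ _]; move: (acyclic_asym a2 E2yx); rewrite E2xy.
case/orP => // E1xw; exfalso.
have wy : w != y by apply: contraTneq Ewy => ->; apply: acyclic_digraph.
have : adjacent E2 w y by rewrite -adjE /adjacent Ewy.
case/orP => [E2wy | E2yw].
  have : adjacent E2 x w by rewrite -adjE /adjacent E1xw.
  case/orP => [E2xw | E2wx].
    by move: (a2 E2xw); rewrite (connect_trans (connect1 E2wy) (connect1 E2yx)).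
  by move: (reversed_not_above E1xw (connect1 Ewy) wy); rewrite E2wx.
have xw : x != w by apply: contraTneq E1xw => ->; apply: acyclic_digraph.
by move: (xmax Ewy E2yw); rewrite leqNgt (n_anc_lt a1 (connect1 E1xw) xw).
Qed.
End CoveredReversedEdge.

Lemma exists_covered_reversed p (E1 E2 : rel 'I_p) : acyclic E1 -> acyclic E2 ->
  adjacent E1 =2 adjacent E2 -> (forall a b c, vstruct E1 a b c = vstruct E2 a b c) ->
  reversed_edges E1 E2 != set0 ->
  exists x y, (x, y) \in reversed_edges E1 E2 /\ covered E1 x y.
Proof.
move=> a1 a2 adjE vsE /set0Pn[[u0 v0]]; rewrite inE /= => /andP[E1uv E2vu].
pose P v := [exists u, E1 u v && E2 v u].
have Pv0 : P v0 by apply/existsP; exists u0; rewrite E1uv E2vu.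
case: (@arg_minnP _ v0 P (n_anc E1) Pv0) => y /existsP[x0 Px0] ymin.
case: (@arg_maxnP _ x0 (fun u => E1 u y && E2 y u) (n_anc E1) Px0) => x /andP[Exy E2yx] xmax.
have ymin' u v : E1 u v -> E2 v u -> n_anc E1 y <= n_anc E1 v.
  by move=> Euv E2v; apply: ymin; apply/existsP; exists u; rewrite Euv E2v.
have xmax' u : E1 u y -> E2 y u -> n_anc E1 u <= n_anc E1 x.
  by move=> Euy E2yu; apply: xmax; rewrite Euy E2yu.
exists x, y; split; first by rewrite inE Exy E2yx.
split=> //; first exact: acyclic_asym.
  exact: (minimal_reversed_parents_x a1 adjE vsE Exy E2yx ymin').
exact: (minimal_reversed_parents_y a1 a2 adjE vsE Exy E2yx ymin' xmax').
Qed.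

Section AcyclicCoveredReversal.
Variables (p : nat) (E : rel 'I_p) (x y : 'I_p).
Hypotheses (aE : acyclic E) (Exy : E x y)
  (Cx : forall z, E z x -> E z y) (Cy : forall z, E z y -> z != x -> E z x).

Let E0 : rel 'I_p := fun a b => E a b && ((a != x) || (b != y)).

Lemma E0_sub : subrel E0 E.
Proof. by move=> a b /andP[]. Qed.

(* The last edge w -> y of such a path has w != x, hence w -> x closes a cycle. *)
Lemma E0_no_path_xy : ~~ connect E0 x y.
Proof.
apply/negP => /connectP[q pq]; case/lastP: q pq => [|q a] /=.
  by move=> _ e; move: Exy; rewrite e (negbTE (acyclic_digraph aE x)).
rewrite last_rcons rcons_path => /andP[pq E0w] ay; subst a.
set w := last x q in E0w.
case/andP: E0w => Ewy; rewrite eqxx orbF => wx.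
have Ewx := Cy Ewy wx.
have : connect E x w.
  apply/connectP; exists q => //; exact: (sub_path E0_sub pq).
by move: (aE Ewx) => /negbTE ->.
Qed.

Lemma reverse_edge_cases a b : reverse_edge E x y a b -> ((a == y) && (b == x)) || E0 a b.
Proof.
rewrite /reverse_edge /E0; case: (boolP ((a == x) && (b == y))) => // h1.
case: (boolP ((a == y) && (b == x))) => // _ Eab.
by rewrite Eab -negb_and h1.
Qed.

Lemma connect_reverse u v : connect (reverse_edge E x y) u v ->
  connect E0 u v || (connect E0 u y && connect E0 x v).
Proof.
move=> /connectP[q pq ->] {v}.
elim: q u pq => [|a q IH] u /=; first by rewrite connect0.
move=> /andP[Eua pq]; have := IH a pq.
case/orP: (reverse_edge_cases Eua) => [/andP[/eqP uy /eqP ax] | E0ua].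
  subst u a => /orP[H | /andP[_ H]]; by rewrite H connect0 orbT.
case/orP => [H | /andP[H1 H2]].
  by rewrite (connect_trans (connect1 E0ua) H).
by rewrite (connect_trans (connect1 E0ua) H1) H2 orbT.
Qed.

Lemma acyclic_reverse : acyclic (reverse_edge E x y).
Proof.
move=> a b Eab; apply/negP => /connect_reverse H.
case/orP: (reverse_edge_cases Eab) => [/andP[/eqP ay /eqP bx] | E0ab].
  subst a b; case/orP: H => [H | /andP[H _]]; by move: E0_no_path_xy; rewrite H.
case/orP: H => [H | /andP[H1 H2]].
  have := aE (E0_sub E0ab).
  by rewrite (connect_sub (fun a b h => connect1 (E0_sub h)) H).
have : connect E0 x y.
  by apply: connect_trans H2 (connect_trans (connect1 E0ab) H1).
by rewrite (negbTE E0_no_path_xy).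
Qed.

Let nEyx : ~~ E y x := acyclic_asym aE Exy.

Let xy : x != y.
Proof. by apply: contraTneq Exy => ->; apply: acyclic_digraph. Qed.

Lemma reverse_to_x a : reverse_edge E x y a x = (a == y) || E a x.
Proof.
rewrite /reverse_edge eqxx andbT (negbTE xy) andbF /=.
by case: (eqVneq a y) => [->|] //=; rewrite (negbTE nEyx).
Qed.

Lemma reverse_to_y a : reverse_edge E x y a y = (a != x) && E a y.
Proof.
rewrite /reverse_edge eqxx andbT (eq_sym y x) (negbTE xy) andbF /=.
by case: (a == x).
Qed.

Lemma adjacent_reverse a b : adjacent (reverse_edge E x y) a b = adjacent E a b.
Proof.
rewrite /adjacent.
case: (boolP ([|| (a == x) && (b == y) | (a == y) && (b == x)])).
  case/orP => /andP[/eqP -> /eqP ->]; rewrite ?reverse_to_y ?reverse_to_x eqxx Exy ?orbT //.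
  by rewrite eqxx.
rewrite negb_or => /andP[h1 h2].
rewrite /reverse_edge (negbTE h1) (negbTE h2) (andbC (b == x)) (negbTE h2) (andbC (b == y)) (negbTE h1).
by [].
Qed.

Lemma vstruct_reverse a b c : vstruct (reverse_edge E x y) a b c = vstruct E a b c.
Proof.
rewrite /vstruct adjacent_reverse.
case H: ((a != c) && ~~ adjacent E a c); last first.
  by move: H; case: (a != c); case: (adjacent E a c) => //= _; rewrite !andbF.
case/andP: H => ac na; rewrite !andbT.
case: (eqVneq b x) => [-> | bx].
  rewrite !reverse_to_x.
  case: (eqVneq a y) => [ay | ay] /=.
    subst a; rewrite (negbTE nEyx) /=.
    case: (eqVneq c y) => [cy|cy] /=; first by move: ac; rewrite cy eqxx.
    by apply/negP => Ecx; move: na; rewrite /adjacent (Cx Ecx) orbT.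
  case: (eqVneq c y) => [cy|cy] //=.
  subst c; rewrite (negbTE nEyx) andbF andbT.
  by apply/negP => Eax; move: na; rewrite /adjacent (Cx Eax).
case: (eqVneq b y) => [-> | by_].
  rewrite !reverse_to_y.
  case: (eqVneq a x) => [ax | ax] /=.
    subst a; apply/esym/negP => /andP[_ Ecy].
    have cx : c != x by rewrite eq_sym.
    by move: na; rewrite /adjacent (Cy Ecy cx) orbT.
  case: (eqVneq c x) => [cx | cx] //=.
  subst c; rewrite andbF; apply/esym/negP => /andP[Eay _].
  by move: na; rewrite /adjacent (Cy Eay ax).
by rewrite !reverse_r.
Qed.

Lemma reversed_edges_reverse (E2 : rel 'I_p) : acyclic E2 -> E2 y x ->
  reversed_edges (reverse_edge E x y) E2 = reversed_edges E E2 :\ (x, y).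
Proof.
move=> a2 E2yx; apply/setP => -[a b]; rewrite !inE /=.
case: (boolP ((a == x) && (b == y))) => [/andP[/eqP -> /eqP ->] | h1].
  by rewrite !eqxx /reverse_edge !eqxx.
case: (boolP ((a == y) && (b == x))) => [/andP[/eqP -> /eqP ->] | h2].
  rewrite /reverse_edge eqxx (negbTE xy) (eq_sym y x) (negbTE xy) /= (negbTE nEyx) /=.
  by rewrite eqxx (negbTE (acyclic_asym a2 E2yx)) !andbF.
have -> : (a, b) != (x, y) by rewrite xpair_eqE.
by rewrite /reverse_edge (negbTE h1) (negbTE h2).
Qed.

End AcyclicCoveredReversal.

Lemma reversed_edges_eq0 p (E1 E2 : rel 'I_p) : adjacent E1 =2 adjacent E2 ->
  reversed_edges E1 E2 = set0 -> E1 = E2.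
Proof.
move=> adjE D0; apply: functional_extensionality => a; apply: functional_extensionality => b.
have notD u v : E1 u v -> E2 v u -> False.
  move=> E1uv E2vu; suff : (u, v) \in reversed_edges E1 E2 by rewrite D0 inE.
  by rewrite inE E1uv E2vu.
apply/idP/idP => H.
  have /orP[// | E2ba] : adjacent E2 a b by rewrite -adjE /adjacent H.
  by case: (notD _ _ H E2ba).
have /orP[// | E1ba] : adjacent E1 a b by rewrite adjE /adjacent H.
by case: (notD _ _ E1ba H).
Qed.

Lemma active_same_vstructs p (E1 E2 : rel 'I_p) S j k : acyclic E1 -> acyclic E2 ->
  adjacent E1 =2 adjacent E2 -> (forall a b c, vstruct E1 a b c = vstruct E2 a b c) ->
  active E1 S j k -> active E2 S j k.
Proof.
move=> + a2; have [n] := ubnP #|reversed_edges E1 E2|.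
elim: n E1 => // n IH E1 szD a1 adjE vsE.
have [D0 | Dn] := eqVneq (reversed_edges E1 E2) set0.
  by rewrite (reversed_edges_eq0 adjE D0).
have [x [y [xyD cov]]] := exists_covered_reversed a1 a2 adjE vsE Dn.
move: (xyD); rewrite inE /= => /andP[_ E2yx]; case: (cov) => Exy _ Cx Cy.
move/(active_reverse_coveredE _ _ _ (acyclic_digraph a1) cov); apply: IH.
- move: szD; rewrite reversed_edges_reverse // (cardsD1 (x, y)) xyD.
  by rewrite add1n ltnS.
- exact: acyclic_reverse.
- by move=> a b; rewrite adjacent_reverse.
- by move=> a b c; rewrite vstruct_reverse.
Qed.

Lemma acyclic_skelE p (E : rel 'I_p) a b : acyclic E ->
  skel E a b <-> (a != b) && adjacent E a b.
Proof.
move=> aE; split; last by case/andP => ab /orP[H | H]; split => //; auto.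
move=> [ab [H | [H | [l [Eal Ebl /orP[H | H]]]]]]; rewrite ab /adjacent ?H ?orbT //.
  by move: (aE _ _ Eal); rewrite H.
by move: (aE _ _ Ebl); rewrite H.
Qed.

Lemma Dsep_not_active p (E : rel 'I_p) j k S : Dsep E j k S -> ~ active E S j k.
Proof. by case=> jk _ _ nd /(active_dconnected jk). Qed.

Lemma Dsep_sub_vstruct p (E1 E2 : rel 'I_p) : acyclic E1 -> acyclic E2 ->
  adjacent E1 =2 adjacent E2 -> Dsep_sub E1 E2 ->
  forall a b c, vstruct E1 a b c = vstruct E2 a b c.
Proof.
move=> a1 a2 adjE sub a b c; rewrite /vstruct -adjE.
have [ac | ] := boolP (a != c); last by rewrite !andbF.
have [ | na] := boolP (adjacent E1 a c); first by rewrite !andbF.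
rewrite !andbT.
have nsk : ~ skel E1 a c by move/(acyclic_skelE _ _ a1); rewrite ac (negbTE na).
have D1 := not_skel_Dsep (acyclic_digraph a1) ac nsk; have D2 := sub _ _ _ D1.
case: (D1) => _ aS _ _.
apply/idP/idP => /andP[Eab Ecb].
  have bS : b \notin anc_set E1 a c.
    rewrite inE; apply/negP => /andP[/orP[ba | bc] _].
      by move: (a1 _ _ Eab); rewrite ba.
    by move: (a1 _ _ Ecb); rewrite bc.
  apply/negPn/negP => ncol; apply: (Dsep_not_active D2).
  by apply: active_noncollider ncol; rewrite // -adjE /adjacent ?Eab ?Ecb ?orbT.
apply/negPn/negP => ncol.
have [bS | bS] := boolP (b \in anc_set E1 a c).
  exact: (Dsep_not_active D2) (active_collider aS Eab Ecb bS).
apply: (Dsep_not_active D1).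
by apply: active_noncollider ncol; rewrite // adjE /adjacent ?Eab ?Ecb ?orbT.
Qed.

Lemma acyclic_Dsep_sub_eq p (E1 E2 : rel 'I_p) : acyclic E1 -> acyclic E2 ->
  skel_eq E1 E2 -> Dsep_sub E1 E2 -> Dsep_eq E1 E2.
Proof.
move=> a1 a2 se sub.
have adjE : adjacent E1 =2 adjacent E2.
  move=> a b; case: (eqVneq a b) => [-> | ab].
    by rewrite /adjacent orbb (negbTE (acyclic_digraph a1 b)) (negbTE (acyclic_digraph a2 b)).
  by have := se a b; rewrite !acyclic_skelE // ab /= => -[? ?]; apply/idP/idP.
have vsE := Dsep_sub_vstruct a1 a2 adjE sub.
move=> j k S; split; first exact: sub.
case=> jk jS kS nd2; split=> // /(dconnected_active jS) act; apply: nd2.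
apply: (active_dconnected jk); apply: active_same_vstructs act => //.
Qed.

Theorem lemma2 :
  (* (a) *)
  (forall (p : nat) (E1 E2 : rel 'I_p), digraph E1 -> digraph E2 ->
     Dsep_sub E1 E2 -> skel_sub E2 E1) /\
  (* (b) existence among directed graphs (cycles allowed) *)
  (exists (p : nat) (E1 E2 : rel 'I_p),
     [/\ digraph E1, digraph E2, skel_eq E1 E2, ~ Dsep_eq E1 E2 & Dsep_sub E1 E2]) /\
  (* (b) impossibility among DAGs *)
  (forall (p : nat) (E1 E2 : rel 'I_p),
     digraph E1 -> digraph E2 -> acyclic E1 -> acyclic E2 ->
     ~ [/\ skel_eq E1 E2, ~ Dsep_eq E1 E2 & Dsep_sub E1 E2]).
Proof.
split; first by move=> p E1 E2 d1 _; apply: Dsep_sub_skel.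
split.
  exists 4, ex1, ex2; split; [exact: ex1_digraph | exact: ex2_digraph | exact: ex_skel_eq |
    exact: ex_not_Dsep_eq | exact: ex_Dsep_sub].
by move=> p E1 E2 _ _ a1 a2 [se nde sub]; apply/nde/acyclic_Dsep_sub_eq.
Qed.
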